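(* Let $q$ be a prime power, $\beta$ a primitive element of $\mathbb{F}_{q^2}$, $\mathrm{Tr}(x)=x+x^q$, and $\Psi:\mathbb{F}_{q^2}^n\to\mathbb{F}_q^{2n}$, $\Psi(\alpha_0,\ldots,\alpha_{n-1})=\left(\mathrm{Tr}(\beta\alpha_0),\ldots,\mathrm{Tr}(\beta\alpha_{n-1}),\mathrm{Tr}(\beta^q\alpha_0),\ldots,\mathrm{Tr}(\beta^q\alpha_{n-1})\right)$. Let $g(x)=g_0+g_1x+\cdots+g_kx^k\in\mathbb{F}_q[x]$ be a monic divisor of $x^{2n}-1$ with $g(x)\neq x^{2n}-1$ (so $0\le k\le 2n-1$), let $\mathscr{D}=\langle g(x)\rangle$ be the $q$-ary linear cyclic code of length $2n$ generated by $g$, and let $\mathscr{C}=\Psi^{-1}(\mathscr{D})$ (an $\mathbb{F}_q$-linear additive conjucyclic code of length $n$ over $\mathbb{F}_{q^2}$). Set $V_{g(x)}=(g_0,g_1,\ldots,g_k,0,\ldots,0)\in\mathbb{F}_q^{2n}$ and $W_{g(x)}=\Psi^{-1}(V_{g(x)})\in\mathbb{F}_{q^2}^n$. Then the $2n-k$ vectors $W_{g(x)},T(W_{g(x)}),\ldots,T^{2n-k-1}(W_{g(x)})$ form an $\mathbb{F}_q$-basis of $\mathscr{C}$; i.e., the matrix with these rows is an additive generator matrix of $\mathscr{C}$.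
   Context: $T:\mathbb{F}_{q^2}^n\to\mathbb{F}_{q^2}^n$ is the conjucyclic shift $T(c_0,\ldots,c_{n-1})=(c_{n-1}^q,c_0,\ldots,c_{n-2})$. Identifying $\mathbb{F}_q^{2n}$ with $\mathbb{F}_q[x]/\langle x^{2n}-1\rangle$ via $(v_0,\ldots,v_{2n-1})\mapsto\sum v_ix^i$, $\langle g(x)\rangle$ is the ideal generated by $g$. *)

From HB Require Import structures.
From mathcomp Require Import all_boot all_order all_algebra all_field.
Set Implicit Arguments. Unset Strict Implicit. Unset Printing Implicit Defensive.
Import GRing.Theory.
Local Open Scope ring_scope.

(* F plays the role of F_q (q := #|F|), L : fieldExtType F with \dim L = 2
   plays the role of F_{q^2}; F embeds in L via c |-> c%:A. *)

Section Defs.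
Variables (F : finFieldType) (L : fieldExtType F) (n : nat).
Local Notation q := #|F|.

Definition trq (x : L) : L := x + x ^+ q.

(* Psi : F_{q^2}^n -> F_q^{2n}, valued in L (all values lie in F) *)
Definition Psi (beta : L) (a : {ffun 'I_n -> L}) : 'I_(n + n) -> L :=
  fun i => match split i with
           | inl j => trq (beta * a j)
           | inr j => trq (beta ^+ q * a j)
           end.

Definition conjshift (c : {ffun 'I_n -> L}) : {ffun 'I_n -> L} :=
  (* ord_pred i is i-1 for i > 0 and n-1 for i = 0 *)
  [ffun i : 'I_n => if (i == 0 :> nat) then c (ord_pred i) ^+ q
                    else c (ord_pred i)].

(* the q-ary cyclic code <g(x)> in F_q[x]/<x^{2n}-1>, vectors identified with
   polynomials of degree < 2n *)
Definition poly_of_vec (c : 'I_(n + n) -> F) : {poly F} :=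
  \sum_(i < n + n) c i *: 'X^i.

Definition in_cyclic_code (g : {poly F}) (c : 'I_(n + n) -> F) : Prop :=
  exists f : {poly F}, poly_of_vec c = (f * g) %% ('X^(n + n) - 1).

Definition Psi_is (beta : L) (a : {ffun 'I_n -> L}) (c : 'I_(n + n) -> F) :=
  forall i, Psi beta a i = (c i)%:A.

Definition in_conj_code (beta : L) (g : {poly F}) (a : {ffun 'I_n -> L}) : Prop :=
  exists2 c, in_cyclic_code g c & Psi_is beta a c.

Definition Vg (g : {poly F}) : 'I_(n + n) -> F := fun i => g`_i.

End Defs.

From HB Require Import structures.
From mathcomp Require Import all_boot all_order all_algebra all_field.
From mathcomp Require Import zify ring.
Set Implicit Arguments. Unset Strict Implicit. Unset Printing Implicit Defensive.
Import GRing.Theory.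
Local Open Scope ring_scope.

(* Psi is an F_q-linear bijection: its two blocks of coordinates are
   Tr(beta x) = beta x + beta^q x^q and Tr(beta^q x) = beta^q x + beta x^q, a
   linear system in (x, x^q) whose determinant beta^2 - beta^(2q) is nonzero
   because beta has order q^2 - 1.  Moreover Psi turns the conjucyclic shift T
   into the cyclic shift of F_q^(2n), i.e. multiplication by x modulo x^(2n) - 1.
   As long as j < 2n - k no coefficient of x^j g wraps around, so
   Psi(T^j W) = x^j g, and Psi maps sum_j u_j T^j W to u g.  Every codeword of
   <g> is u g with deg u < 2n - k, and u g = 0 forces u = 0, which gives both
   spanning and freeness. *)

Section Frobenius.
Variables (F : finFieldType) (L : fieldExtType F).

Definition frob (x : L) : L := x ^+ #|F|.
Arguments frob : simpl never.

Fact frob_is_zmod_morphism : zmod_morphism frob.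
Proof.
have [p _ pcharFp] := finPcharP F; rewrite /frob (card_pprimeChar pcharFp).
have pcharLp : p \in [pchar L] by rewrite (pchar_lalg L).
move=> x y; elim: (logn _ _) => [|k IHk]; first by rewrite !expr1.
by rewrite expnSr !exprM IHk -!(pFrobenius_autE pcharLp) rmorphB.
Qed.
HB.instance Definition _ :=
  GRing.isZmodMorphism.Build L L frob frob_is_zmod_morphism.

Fact frob_is_monoid_morphism : monoid_morphism frob.
Proof. by rewrite /frob; split=> [|x y]; rewrite ?exprMn ?expr1n. Qed.
HB.instance Definition _ :=
  GRing.isMonoidMorphism.Build L L frob frob_is_monoid_morphism.

Lemma frobD (x y : L) : frob (x + y) = frob x + frob y. Proof. exact: rmorphD. Qed.
Lemma frobB (x y : L) : frob (x - y) = frob x - frob y. Proof. exact: rmorphB. Qed.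
Lemma frobM (x y : L) : frob (x * y) = frob x * frob y. Proof. exact: rmorphM. Qed.
Lemma frobV (x : L) : frob x^-1 = (frob x)^-1. Proof. exact: fmorphV. Qed.

Lemma frobZ (c : F) (x : L) : frob (c *: x) = c *: frob x.
Proof. by rewrite /frob exprZn expf_card. Qed.

Lemma frob_alg (c : F) : frob c%:A = c%:A.
Proof. by rewrite frobZ [frob 1]rmorph1. Qed.

Lemma trqE (x : L) : trq x = x + frob x.
Proof. by []. Qed.

Lemma trqB (x y : L) : trq (x - y) = trq x - trq y.
Proof. by rewrite !trqE frobB addrACA opprD. Qed.

Lemma trqD (x y : L) : trq (x + y) = trq x + trq y.
Proof. by rewrite !trqE frobD addrACA. Qed.

Lemma trqZ (c : F) (x : L) : trq (c *: x) = c *: trq x.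
Proof. by rewrite !trqE frobZ scalerDr. Qed.

Hypothesis dimL2 : \dim {: L} = 2%N.

Lemma frobK : involutive frob.
Proof.
move=> x; rewrite /frob -exprM mulnn.
by have := Fermat's_little_theorem {:L}%AS x; rewrite memvf dimL2 => /esym/eqP.
Qed.

Lemma trq_mul_frob (x y : L) : trq (x * frob y) = trq (frob x * y).
Proof. by rewrite !trqE !frobM !frobK addrC. Qed.

End Frobenius.

Lemma val_ord_pred m (i : 'I_m) :
  ord_pred i = (if i == 0 :> nat then m.-1 else i.-1) :> nat.
Proof.
have lt_i_m := ltn_ord i; rewrite /=; case: eqP => [-> | /eqP i_neq0].
  by rewrite add0n modn_small // prednK // (leq_ltn_trans _ lt_i_m).
have i_gt0 : (0 < i)%N by rewrite lt0n.
rewrite -[in (i + m).-1](prednK i_gt0) addSn /= modnDr modn_small //.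
exact: leq_ltn_trans (leq_pred i) lt_i_m.
Qed.

Lemma ord_pred_lshift m (j : 'I_m) :
  ord_pred (lshift m j) =
    if j == 0 :> nat then rshift m (ord_pred j) else lshift m (ord_pred j).
Proof.
apply: ord_inj; rewrite val_ord_pred -[nat_of_ord (lshift m j)]/(nat_of_ord j).
have := ltn_ord j; case: eqP => [j0|/eqP/negbTE j_neq0] lt_j_m.
  by rewrite -[RHS]/(m + ord_pred j) val_ord_pred j0 /=; lia.
by rewrite -[RHS]/(nat_of_ord (ord_pred j)) val_ord_pred j_neq0.
Qed.

Lemma ord_pred_rshift m (j : 'I_m) :
  ord_pred (rshift m j) =
    if j == 0 :> nat then lshift m (ord_pred j) else rshift m (ord_pred j).
Proof.
apply: ord_inj; rewrite val_ord_pred -[nat_of_ord (rshift m j)]/(m + j).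
have := ltn_ord j; case: eqP => [|_]; first by lia.
case: eqP => [j0|/eqP/negbTE j_neq0] lt_j_m.
  by rewrite -[RHS]/(nat_of_ord (ord_pred j)) val_ord_pred j0 /=; lia.
rewrite -[RHS]/(m + ord_pred j) val_ord_pred j_neq0.
by move/negbT: j_neq0; rewrite -lt0n; lia.
Qed.

Section TraceCoordinates.
Variables (F : finFieldType) (L : fieldExtType F).
Hypothesis dimL2 : \dim {: L} = 2%N.
Variable beta : L.
Hypothesis beta_prim : (#|F| ^ 2 - 1).-primitive_root beta.
Local Notation beta' := (frob beta).

Lemma sqr_beta_neq_frob : beta ^+ 2 != beta' ^+ 2.
Proof.
have q_gt1 : (1 < #|F|)%N := finNzRing_gt1 F.
rewrite /frob -exprM eq_sym (eq_prim_root_expr beta_prim) eqn_mod_dvd; last by lia.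
by apply/negP => /dvdn_leq; nia.
Qed.

Lemma trq_coord_eq0 (x : L) : trq (beta * x) = 0 -> trq (beta' * x) = 0 -> x = 0.
Proof.
rewrite !trqE !frobM frobK // => tr1 tr2.
have : (beta ^+ 2 - beta' ^+ 2) * x
         = beta * (beta * x + beta' * frob x) - beta' * (beta' * x + beta * frob x).
  by ring.
rewrite tr1 tr2 !mulr0 subr0 => /eqP.
by rewrite mulf_eq0 subr_eq0 (negPf sqr_beta_neq_frob) => /eqP.
Qed.

(* Cramer's rule for the 2x2 system in (x, frob x). *)
Definition trq_coord_solve (u v : F) : L :=
  (beta * u%:A - beta' * v%:A) / (beta ^+ 2 - beta' ^+ 2).

Lemma trq_coord_solveP (u v : F) :
  trq (beta * trq_coord_solve u v) = u%:A /\ trq (beta' * trq_coord_solve u v) = v%:A.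
Proof.
have frobK_beta := frobK dimL2 beta.
have frob_solve : frob (trq_coord_solve u v)
    = (beta' * u%:A - beta * v%:A) / (beta' ^+ 2 - beta ^+ 2).
  by rewrite /trq_coord_solve !(frobM, frobV, frobB) frobK_beta !frob_alg -!expr2.
rewrite !trqE !(frobM _ (trq_coord_solve u v)) frob_solve frobK_beta /trq_coord_solve.
move: sqr_beta_neq_frob; set c := frob beta => det_neq0.
by split; field; rewrite !subr_eq0 eq_sym andbb.
Qed.

End TraceCoordinates.

Section PsiMap.
Variables (F : finFieldType) (L : fieldExtType F).
Hypothesis dimL2 : \dim {: L} = 2%N.
Variable beta : L.
Hypothesis beta_prim : (#|F| ^ 2 - 1).-primitive_root beta.
Variable n : nat.
Implicit Types a b : {ffun 'I_n -> L}.

Lemma Psi_lshift a j : Psi beta a (lshift n j) = trq (beta * a j).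
Proof. by rewrite /Psi (unsplitK (inl _ j)). Qed.

Lemma Psi_rshift a j : Psi beta a (rshift n j) = trq (frob beta * a j).
Proof. by rewrite /Psi (unsplitK (inr _ j)). Qed.

Lemma PsiD a b i : Psi beta (a + b) i = Psi beta a i + Psi beta b i.
Proof.
by case: (split_ordP i) => j ->; rewrite ?Psi_lshift ?Psi_rshift ffunE mulrDr trqD.
Qed.

Lemma PsiZ (c : F) a i : Psi beta (c *: a) i = c *: Psi beta a i.
Proof.
by case: (split_ordP i) => j ->; rewrite ?Psi_lshift ?Psi_rshift ffunE -scalerAr trqZ.
Qed.

Lemma Psi0 i : Psi beta (0 : {ffun 'I_n -> L}) i = 0.
Proof. by rewrite -(scale0r 0) PsiZ scale0r. Qed.

Lemma Psi_lincomb k (c : 'I_k -> F) (v : 'I_k -> {ffun 'I_n -> L}) i :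
  Psi beta (\sum_(j < k) c j *: v j) i = \sum_(j < k) c j *: Psi beta (v j) i.
Proof.
rewrite (big_morph (Psi beta ^~ i) (fun a b => PsiD a b i) (Psi0 i)).
by apply: eq_bigr => j _; rewrite PsiZ.
Qed.

Lemma Psi_inj a b : Psi beta a =1 Psi beta b -> a = b.
Proof.
move=> eq_ab; apply/ffunP => j; apply/eqP; rewrite -subr_eq0; apply/eqP.
apply: (trq_coord_eq0 dimL2 beta_prim).
  by rewrite mulrBr trqB -!Psi_lshift eq_ab subrr.
by rewrite mulrBr trqB -!Psi_rshift eq_ab subrr.
Qed.

Lemma Psi_surj (c : 'I_(n + n) -> F) : exists a, Psi_is beta a c.
Proof.
pose solve j := trq_coord_solve beta (c (lshift n j)) (c (rshift n j)).
exists [ffun j => solve j] => i; case: (split_ordP i) => j ->;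
  rewrite ?Psi_lshift ?Psi_rshift ffunE;
  by case: (trq_coord_solveP dimL2 beta_prim (c (lshift n j)) (c (rshift n j))).
Qed.

Lemma Psi_conjshift a i : Psi beta (conjshift a) i = Psi beta a (ord_pred i).
Proof.
case: (split_ordP i) => j ->;
  rewrite ?ord_pred_lshift ?ord_pred_rshift ?Psi_lshift ?Psi_rshift ffunE;
  case: eqP => _; rewrite ?Psi_lshift ?Psi_rshift // -/(frob _) trq_mul_frob //.
by rewrite frobK.
Qed.

End PsiMap.

Section PolyCoefficients.
Variable R : nzRingType.
Implicit Types p q : {poly R}.

Lemma coef_sum_ordXn N (c : 'I_N -> R) (i : 'I_N) :
  (\sum_(j < N) c j *: 'X^j)`_i = c i.
Proof. by rewrite coef_sumMXn (big_pred1 i) // => j /=; exact: val_eqE. Qed.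

Lemma size_sum_ordXn N (c : 'I_N -> R) : (size (\sum_(j < N) c j *: 'X^j)%R <= N)%N.
Proof.
apply/leq_sizeP => k le_N_k; rewrite coef_sumMXn big_pred0 // => j /=.
by apply/negbTE; rewrite neq_ltn (leq_trans (ltn_ord j)).
Qed.

Lemma sum_ordXn_coef N p : (size p <= N)%N -> \sum_(j < N) p`_j *: 'X^j = p.
Proof.
move=> le_p_N; rewrite -poly_def; apply/polyP => k; rewrite coef_poly.
by case: ltnP => // le_N_k; rewrite nth_default // (leq_trans le_p_N).
Qed.

Lemma coef_ord_pred N p (i : 'I_N) :
  (size p < N)%N -> p`_(ord_pred i) = ('X * p)`_i.
Proof.
move=> lt_p_N; rewrite coefXM val_ord_pred; case: eqP => // _.
by rewrite nth_default // -ltnS prednK // (leq_trans _ (ltn_ord i)).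
Qed.

Lemma size_Mmonic_leq p q N :
  q \is monic -> (size (p * q)%R <= N)%N = (size p <= N - (size q).-1)%N.
Proof.
move=> q_monic; have [->|p_neq0] := eqVneq p 0; first by rewrite mul0r size_poly0.
rewrite size_Mmonic // -subn1 -addnBA ?size_poly_gt0 ?monic_neq0 // subn1.
by have := size_poly_gt0 p; rewrite p_neq0; lia.
Qed.

End PolyCoefficients.

Section CyclicCode.
Variables (F : finFieldType) (n : nat) (g : {poly F}).
Hypotheses (n_gt0 : (0 < n)%N) (g_dvd : g %| 'X^(n + n) - 1).

Lemma in_cyclic_codeP (c : 'I_(n + n) -> F) :
  in_cyclic_code g c <-> g %| poly_of_vec c.
Proof.
split=> [[f ->] | /dvdpP[u def_c]]; first by rewrite -(dvdp_mod _ g_dvd) dvdp_mull.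
exists u; rewrite -def_c modp_small // -polyC1 size_XnsubC ?addn_gt0 ?n_gt0 //.
exact: size_sum_ordXn.
Qed.

End CyclicCode.

Section ConjucyclicCode.
Variables (F : finFieldType) (L : fieldExtType F).
Hypothesis dimL2 : \dim {: L} = 2%N.
Variable beta : L.
Hypothesis beta_prim : (#|F| ^ 2 - 1).-primitive_root beta.
Variables (n : nat) (g : {poly F}).
Hypotheses (n_gt0 : (0 < n)%N) (g_monic : g \is monic).
Hypothesis g_dvd : g %| 'X^(n + n) - 1.
Variable W : {ffun 'I_n -> L}.
Hypothesis PsiW : Psi_is beta W (@Vg F n g).

Local Notation m := (n + n - (size g).-1)%N.
Local Notation B := (mkseq (fun j => iter j (@conjshift F L n) W) m).

Lemma size_mul_g_leq (u : {poly F}) : (size (u * g)%R <= n + n)%N = (size u <= m)%N.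
Proof. exact: size_Mmonic_leq. Qed.

Lemma Psi_iter_conjshift j i :
  (j < m)%N -> Psi beta (iter j (@conjshift F L n) W) i = (('X^j * g)`_i)%:A.
Proof.
elim: j i => [|j IHj] i lt_j_m; first by rewrite expr0 mul1r PsiW.
have lt_Xjg : (size ('X^j * g)%R < n + n)%N.
  rewrite -[X in (_ < X)%N]prednK ?addn_gt0 ?n_gt0 // ltnS size_Mmonic_leq //.
  by move: lt_j_m; rewrite size_polyXn -!subn1; lia.
by rewrite iterS (Psi_conjshift dimL2) IHj 1?ltnW // coef_ord_pred // exprS mulrA.
Qed.

Lemma Psi_conjshifts_lincomb (c : 'I_(size B) -> F) i :
  Psi beta (\sum_j c j *: B`_j) i = (((\sum_j c j *: 'X^j) * g)`_i)%:A.
Proof.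
rewrite Psi_lincomb mulr_suml coef_sum scaler_suml; apply: eq_bigr => j _.
have lt_j_m : (j < m)%N := leq_trans (ltn_ord j) (eq_leq (size_mkseq _ _)).
by rewrite nth_mkseq // Psi_iter_conjshift // -scalerAl coefZ scalerA.
Qed.

Lemma size_lincombXn_mul_g (c : 'I_(size B) -> F) :
  (size ((\sum_j c j *: 'X^j) * g)%R <= n + n)%N.
Proof. by rewrite size_mul_g_leq (leq_trans (size_sum_ordXn c)) // size_mkseq. Qed.

Lemma free_conjshifts : free B.
Proof.
apply/(@freeP _ _ _ (in_tuple B)) => c comb0 i.
set u := \sum_(j < size B) c j *: 'X^j.
have ug0 : u * g = 0.
  rewrite -(sum_ordXn_coef (size_lincombXn_mul_g c)) big1 // => k _.
  have := Psi_conjshifts_lincomb c k; rewrite comb0 Psi0 => /esym/eqP.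
  by rewrite scaler_eq0 oner_eq0 orbF => /eqP ->; rewrite scale0r.
have /eqP := ug0; rewrite mulf_eq0 (negbTE (monic_neq0 g_monic)) orbF => /eqP u0.
by rewrite -(coef_sum_ordXn c) -/u u0 coef0.
Qed.

Lemma in_conj_code_span a : in_conj_code beta g a <-> a \in <<B>>%VS.
Proof.
split=> [[c /(in_cyclic_codeP n_gt0 g_dvd)/dvdpP[u def_c] Psi_a] | a_span].
  have le_u_B : (size u <= size B)%N.
    by rewrite size_mkseq -size_mul_g_leq -def_c size_sum_ordXn.
  have -> : a = \sum_(j < size B) u`_j *: B`_j.
    apply: (Psi_inj dimL2 beta_prim) => i.
    by rewrite Psi_a Psi_conjshifts_lincomb sum_ordXn_coef // -def_c coef_sum_ordXn.
  by apply: rpred_sum => j _; rewrite rpredZ // memv_span // mem_nth.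
pose u := \sum_(j < size B) coord (in_tuple B) j a *: 'X^j.
exists (fun i => (u * g)`_i).
  apply/(in_cyclic_codeP n_gt0 g_dvd).
  by rewrite /poly_of_vec sum_ordXn_coef ?dvdp_mull ?size_lincombXn_mul_g.
move=> i.
by rewrite {1}(@coord_span _ _ _ (in_tuple B) _ a_span) Psi_conjshifts_lincomb.
Qed.

End ConjucyclicCode.

Theorem theorem4p3 (F : finFieldType) (L : fieldExtType F) (n : nat)
  (beta : L) (g : {poly F}) :
  \dim {: L} = 2%N ->
  (#|F| ^ 2 - 1).-primitive_root beta ->
  (0 < n)%N ->
  g \is monic ->
  g %| ('X^(n + n) - 1) ->
  g != 'X^(n + n) - 1 ->
  (exists W : {ffun 'I_n -> L}, Psi_is beta W (@Vg F n g)) /\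
  (forall W : {ffun 'I_n -> L}, Psi_is beta W (@Vg F n g) ->
     let B := mkseq (fun j => iter j (@conjshift F L n) W) (n + n - (size g).-1) in
     free B /\ (forall a : {ffun 'I_n -> L}, in_conj_code beta g a <-> a \in <<B>>%VS)).
Proof.
move=> dimL2 beta_prim n_gt0 g_monic g_dvd _.
split=> [|W PsiW B]; first exact (Psi_surj dimL2 beta_prim (@Vg F n g)).
split; first exact (free_conjshifts dimL2 beta_prim n_gt0 g_monic g_dvd PsiW).
exact (in_conj_code_span dimL2 beta_prim n_gt0 g_monic g_dvd PsiW).
Qed.
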